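(* Let $C_n^\sigma=(C_n,\sigma)$, $n\ge 3$, be a compatible signed cycle. Then $\dim(C_n^\sigma)=1$ if and only if there exists a vertex $u$ such that $d^{\pm}(u)=0$ (i.e. the two edges at $u$ have opposite signs) and, for every $k\in\{1,2,\dots,\lfloor n/2\rfloor\}$ and all distinct $v,w\in N_k(u)$, one has $\sigma(uv)\neq\sigma(uw)$.
   Context: A signed graph $\Sigma=(G,\sigma)$ consists of a finite simple connected graph $G=(V,E)$ and a signature $\sigma:E\to\{+1,-1\}$. For vertices $u,v$, $d(u,v)$ denotes the usual distance in $G$; the sign of a path $P$ is $\sigma(P)=\prod_{e\in P}\sigma(e)$. Set $\sigma_{\max}(uv)=-1$ if every shortest $u$–$v$ path has sign $-1$, and $\sigma_{\max}(uv)=+1$ otherwise; set $\sigma_{\min}(uv)=+1$ if every shortest $u$–$v$ path has sign $+1$, and $\sigma_{\min}(uv)=-1$ otherwise. $\Sigma$ is (distance) compatible if $\sigma_{\max}(uv)d(u,v)=\sigma_{\min}(uv)d(u,v)$ for all vertices $u,v$; in that case the signed distance is $d_\Sigma(u,v)=\sigma_{\max}(uv)\,d(u,v)$, and $\sigma(uv)$ denotes the common value $\sigma_{\max}(uv)=\sigma_{\min}(uv)$ (for an edge $uv$ this is its edge sign). $d^+(v)$ and $d^-(v)$ are the numbers of positive and negative edges at $v$, and $d^\pm(v)=d^+(v)-d^-(v)$ is the net-degree. The open $k$-neighbourhood of $v$ is $N_k(v)=\{u: d_\Sigma(u,v)=\pm k\}$, i.e. the vertices at distance $k$ from $v$. For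 a compatible $\Sigma$ and an ordered subset $W=(w_1,\dots,w_k)$ of $V$, the metric representation of $v\in V$ is $r_\Sigma(v|W)=(d_\Sigma(v,w_1),\dots,d_\Sigma(v,w_k))$. $W$ is a resolving set of $\Sigma$ if $r_\Sigma(u|W)\neq r_\Sigma(v|W)$ for all distinct $u,v\in V$; a basis is a resolving set of minimum cardinality, and that cardinality is the metric dimension $\dim(\Sigma)$. *)

From mathcomp Require Import all_boot all_order all_algebra.
Set Implicit Arguments. Unset Strict Implicit. Unset Printing Implicit Defensive.
Import Order.TTheory GRing.Theory Num.Theory.

(* A signed graph on a finite vertex type T: adjacency relation [adj]
   (assumed symmetric and irreflexive) and a signature [neg] where
   [neg x y = true] means the edge xy is negative (sign -1).
   [neg] is assumed symmetric; its values on non-edges are irrelevant. *)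
Section SignedGraph.
Variables (T : finType) (adj : rel T) (neg : T -> T -> bool).

Definition walk (u : T) (p : seq T) (v : T) : bool :=
  path adj u p && (last u p == v).

Definition has_walk (k : nat) (u v : T) : bool :=
  [exists t : k.-tuple T, walk u t v].

(* usual distance: least length of a u-v walk (for a connected graph this
   is < #|T|, so the search range below is sufficient) *)
Definition dist (u v : T) : nat :=
  find (fun k => has_walk k u v) (iota 0 #|T|).

Fixpoint nneg (u : T) (p : seq T) : nat :=
  if p is x :: p' then neg u x + nneg x p' else 0.

Definition wsign (u : T) (p : seq T) : int := ((-1) ^+ nneg u p)%R.

(* shortest u-v paths are the u-v walks of length dist u v *)
Definition sigma_max (u v : T) : int :=
  if [forall t : (dist u v).-tuple T, walk u t v ==> (wsign u t == (-1)%R)]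
  then (-1)%R else 1%R.

Definition sigma_min (u v : T) : int :=
  if [forall t : (dist u v).-tuple T, walk u t v ==> (wsign u t == 1%R)]
  then 1%R else (-1)%R.

Definition compatible : Prop :=
  forall u v, (sigma_max u v * (dist u v)%:Z = sigma_min u v * (dist u v)%:Z)%R.

(* signed distance (meaningful for compatible signed graphs) *)
Definition sdist (u v : T) : int := (sigma_max u v * (dist u v)%:Z)%R.

Definition netdeg (v : T) : int :=
  ((#|[set w | adj v w && ~~ neg v w]|)%:Z - (#|[set w | adj v w && neg v w]|)%:Z)%R.

Definition Nk (v : T) (k : nat) : {set T} := [set u | dist u v == k].

(* resolving set (order of W irrelevant for distinguishing vectors) *)
Definition resolving (W : {set T}) : Prop :=
  forall u v, u != v -> exists2 w, w \in W & sdist u w != sdist v w.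

Definition metric_dim_is (m : nat) : Prop :=
  (exists W : {set T}, resolving W /\ #|W| = m) /\
  (forall W : {set T}, resolving W -> m <= #|W|).

End SignedGraph.

Definition cycle_adj (n : nat) : rel 'I_n :=
  fun i j => (val j == (val i).+1 %% n) || (val i == (val j).+1 %% n).
Arguments cycle_adj : clear implicits.

From mathcomp Require Import all_boot all_order all_algebra.
From mathcomp Require Import zify.
Import Order.TTheory GRing.Theory Num.Theory.

Set Implicit Arguments.
Unset Strict Implicit.
Unset Printing Implicit Defensive.

(* For an arbitrary signed graph with symmetric
   adjacency and signature, walks can be reversed, so the distance d(u,v) and
   the sign sigma_max(uv) are symmetric, and |d_Sigma(u,v)| = d(u,v).  Hence a
   singleton {u} resolves Sigma exactly when, at every distance k from u, the
   vertices of N_k(u) are told apart by their sign sigma(uv) alone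
   ([resolving1P]); and the dimension is 1 exactly when some singleton
   resolves ([metric_dim1P]).

   For the cycle C_n one only has to observe that every distance is at most
   n/2 (so larger k impose no condition) and that u has exactly two distinct
   neighbours; these lie in N_1(u), so separating them by sign means the two
   edges at u have opposite signs, i.e. d^{+-}(u) = 0. *)

Section SignedGraph.
Variables (T : finType) (adj : rel T) (neg : T -> T -> bool).
Hypothesis adj_sym : symmetric adj.
Hypothesis neg_sym : forall x y, neg x y = neg y x.

Lemma has_walkP k u v :
  reflect (exists2 p : seq T, size p = k & walk adj u p v) (has_walk adj k u v).
Proof.
apply: (iffP existsP) => [[t t_walk]|[p /eqP p_size p_walk]].
  by exists (val t); rewrite ?size_tuple.
by exists (Tuple p_size).
Qed.

Definition rev_walk (u : T) (p : seq T) : seq T := rev (belast u p).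

Lemma last_rev_walk u p : last (last u p) (rev_walk u p) = u.
Proof. by case: p => [|x p] //=; rewrite /rev_walk /= rev_cons last_rcons. Qed.

Lemma size_rev_walk u p : size (rev_walk u p) = size p.
Proof. by rewrite size_rev size_belast. Qed.

Lemma walk_rev u p v : walk adj u p v -> walk adj v (rev_walk u p) u.
Proof.
rewrite /walk => /andP[u_path /eqP <-].
rewrite last_rev_walk eqxx andbT rev_path.
by rewrite (@eq_path _ _ adj) // => x y; rewrite adj_sym.
Qed.

Lemma nneg_rev_walk u p : nneg neg (last u p) (rev_walk u p) = nneg neg u p.
Proof.
have nneg_rcons x s y : nneg neg x (rcons s y) = nneg neg x s + neg (last x s) y.
  by elim: s x => [|z s IHs] x /=; rewrite ?addn0 // IHs addnA.
elim: p u => [|x p IHp] u //=.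
by rewrite /rev_walk /= rev_cons nneg_rcons IHp last_rev_walk neg_sym addnC.
Qed.

Lemma has_walk_sym k u v : has_walk adj k u v = has_walk adj k v u.
Proof.
suff rev_has_walk x y : has_walk adj k x y -> has_walk adj k y x.
  by apply/idP/idP; apply: rev_has_walk.
move/has_walkP => [p p_size p_walk]; apply/has_walkP.
by exists (rev_walk x p); [rewrite size_rev_walk | exact: walk_rev].
Qed.

Lemma dist_sym u v : dist adj u v = dist adj v u.
Proof. by apply: eq_find => k; apply: has_walk_sym. Qed.

Definition all_walks_negative k u v : bool :=
  [forall t : k.-tuple T, walk adj u t v ==> (wsign neg u t == (-1)%R)].

Lemma all_walks_negative_sym k u v :
  all_walks_negative k u v = all_walks_negative k v u.
Proof.
suff rev_negative x y : all_walks_negative k x y -> all_walks_negative k y x.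
  by apply/idP/idP; apply: rev_negative.
move/forallP=> x_neg; apply/forallP => t; apply/implyP => t_walk.
have rev_size : size (rev_walk y t) == k by rewrite size_rev_walk size_tuple.
have := x_neg (Tuple rev_size); rewrite /= (walk_rev t_walk) /wsign.
by move: t_walk => /andP[_ /eqP <-]; rewrite nneg_rev_walk.
Qed.

Lemma sigma_max_sym u v : sigma_max adj neg u v = sigma_max adj neg v u.
Proof.
rewrite /sigma_max (dist_sym u v).
by rewrite -!/(all_walks_negative _ _ _) all_walks_negative_sym.
Qed.

Lemma dist_le k u v : has_walk adj k u v -> k < #|T| -> dist adj u v <= k.
Proof.
move=> uv_walk k_lt; rewrite leqNgt; apply/negP => k_lt_dist.
by have := before_find 0 k_lt_dist; rewrite nth_iota // add0n uv_walk.
Qed.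

Lemma dist_eq0 u v : dist adj u v = 0 -> u = v.
Proof.
move=> d0; have T_gt0 : 0 < #|T| by apply/card_gt0P; exists u.
have has_dist : has (fun k => has_walk adj k u v) (iota 0 #|T|).
  by rewrite has_find size_iota -/(dist adj u v) d0.
have := nth_find 0 has_dist; rewrite -/(dist adj u v) d0 nth_iota // add0n.
by move/has_walkP => [[|//] _ /andP[_ /eqP]].
Qed.

Lemma dist_adj u v : adj u v -> u != v -> dist adj u v = 1.
Proof.
move=> uv_adj uv_neq; apply/eqP; rewrite eqn_leq; apply/andP; split.
  apply: dist_le; last by apply/card_gt1P; exists u, v.
  by apply/has_walkP; exists [:: v]; rewrite // /walk /= uv_adj eqxx.
by rewrite lt0n; apply: contra uv_neq => /eqP/dist_eq0 ->.
Qed.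

(* On an edge uv, the only shortest path is the edge itself. *)
Lemma sigma_max_adj u v : adj u v -> u != v ->
  sigma_max adj neg u v = if neg u v then (-1)%R else 1%R.
Proof.
move=> uv_adj uv_neq; rewrite /sigma_max (dist_adj uv_adj uv_neq).
case uv_neg: (neg u v).
  rewrite ifT //; apply/forallP => -[[|x [|//]] //= _].
  by apply/implyP; rewrite /walk /= => /andP[_ /eqP ->]; rewrite /wsign /= uv_neg.
rewrite ifF //; apply/negbTE/forallPn; exists [tuple v].
by rewrite /walk /= uv_adj eqxx /wsign /= uv_neg.
Qed.

Lemma abs_sdist u v : `|sdist adj neg u v|%N = dist adj u v.
Proof. by rewrite /sdist abszM /sigma_max; case: ifP; rewrite mul1n. Qed.

Definition sign_separated (u : T) (k : nat) : Prop :=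
  forall v w, v \in Nk adj u k -> w \in Nk adj u k -> v != w ->
    sigma_max adj neg u v != sigma_max adj neg u w.

(* N_0(u) = {u}, so the condition is vacuous at distance 0. *)
Lemma sign_separated0 u : sign_separated u 0.
Proof. by move=> v w; rewrite !inE => /eqP/dist_eq0 -> /eqP/dist_eq0 ->; rewrite eqxx. Qed.

(* {u} is resolving iff each open neighbourhood N_k(u) is sign-separated:
   as |d_Sigma(v,u)| = d(v,u), vertices with the same representation lie in a
   common N_k(u) and can then only be told apart by sigma(uv). *)
Lemma resolving1P u :
  resolving adj neg [set u] <-> forall k, sign_separated u k.
Proof.
split=> [u_res k v w | separated x y xy_neq].
  rewrite !inE => /eqP vk /eqP wk vw_neq.
  have [_ /set1P -> ] := u_res v w vw_neq.
  by rewrite /sdist vk wk !(sigma_max_sym _ u); apply: contra => /eqP ->.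
exists u; first exact: set11.
apply: contraPneq (separated (dist adj x u) x y) => sd_eq.
have d_eq : dist adj x u = dist adj y u by rewrite -!abs_sdist sd_eq.
have [d0 | d_gt0] := posnP (dist adj x u).
  by move: xy_neq; rewrite (dist_eq0 d0) (dist_eq0 (etrans (esym d_eq) d0)) eqxx.
have d_neq0 : (Posz (dist adj x u) != 0)%R by rewrite -lt0n in d_gt0 *.
move: sd_eq; rewrite /sdist -d_eq => /(mulIf d_neq0) sigma_eq.
rewrite !inE d_eq eqxx => /(_ isT isT xy_neq).
by rewrite !(sigma_max_sym u) sigma_eq eqxx.
Qed.

(* With at least two vertices the empty set does not resolve, so the metric
   dimension is 1 exactly when some singleton resolves. *)
Lemma metric_dim1P (a b : T) : a != b ->
  metric_dim_is adj neg 1 <-> exists u, resolving adj neg [set u].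
Proof.
move=> ab_neq; split=> [[[W [W_res /eqP/cards1P [u W_eq]]] _] | [u u_res]].
  by exists u; rewrite -W_eq.
split=> [|W W_res]; first by exists [set u]; rewrite cards1.
rewrite card_gt0; apply: contraPneq (W_res a b ab_neq) => ->.
by case=> w; rewrite inE.
Qed.

Lemma netdeg_two_neighbours u a b :
  a != b -> (forall w, adj u w = (w == a) || (w == b)) -> neg u a != neg u b ->
  netdeg adj neg u = 0%R.
Proof.
move=> ab_neq nbrs.
have signed_nbrs c d : c != d -> (forall w, adj u w = (w == c) || (w == d)) ->
    neg u c -> ~~ neg u d -> netdeg adj neg u = 0%R.
  move=> cd_neq cd_nbrs c_neg d_pos.
  have pos_set : [set w | adj u w && ~~ neg u w] = [set d].
    apply/setP => w; rewrite !inE cd_nbrs.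
    have [->|_] := eqVneq w d; first by rewrite orbT d_pos.
    by rewrite orbF; case: eqP => [->|//]; rewrite c_neg.
  have neg_set : [set w | adj u w && neg u w] = [set c].
    apply/setP => w; rewrite !inE cd_nbrs.
    have [->|_] := eqVneq w c; first by rewrite c_neg.
    by case: eqP => [->|//]; rewrite (negbTE d_pos).
  by rewrite /netdeg pos_set neg_set !cards1 subrr.
case a_neg: (neg u a); case b_neg: (neg u b) => // _.
  by apply: (signed_nbrs a b); rewrite ?b_neg.
apply: (signed_nbrs b a); rewrite 1?eq_sym ?a_neg // => w.
by rewrite nbrs orbC.
Qed.

End SignedGraph.

Lemma modn_once a d :
  a < d + d -> (a < d /\ a %% d = a) \/ (d <= a /\ a %% d = a - d).
Proof.
case: (ltnP a d) => a_d; [left; split => //; exact: modn_small | right].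
by split=> //; rewrite -{1}(subnK a_d) modnDr modn_small //; lia.
Qed.

Section Cycle.
Variable n : nat.
Hypothesis n_gt2 : 2 < n.

Local Notation adj := (cycle_adj n).

Fact n_gt0 : 0 < n. Proof. exact: ltn_trans n_gt2. Qed.

Lemma cycle_adj_sym : symmetric adj.
Proof. by move=> x y; rewrite /cycle_adj orbC. Qed.

Definition succ (i : 'I_n) : 'I_n := Ordinal (ltn_pmod i.+1 n_gt0).
Definition pred (i : 'I_n) : 'I_n := Ordinal (ltn_pmod (i + n.-1) n_gt0).

Lemma cycle_nbrs u w : adj u w = (w == succ u) || (w == pred u).
Proof.
have u_lt := ltn_ord u; have w_lt := ltn_ord w.
have -> : adj u w = (w == u.+1 %% n :> nat) || (u == w.+1 %% n :> nat) by [].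
congr (_ || _).
have := @modn_once w.+1 n ltac:(lia); have := @modn_once (u + n.-1) n ltac:(lia).
by move=> *; apply/eqP/eqP => [uw|/(congr1 (@nat_of_ord n)) /= wu]; [apply: ord_inj => /=|]; lia.
Qed.

Lemma succ_pred_neq u : [/\ succ u != pred u, succ u != u & pred u != u].
Proof.
have u_lt := ltn_ord u.
have := @modn_once u.+1 n ltac:(lia); have := @modn_once (u + n.-1) n ltac:(lia).
by move=> *; split; apply/eqP => /(congr1 (@nat_of_ord n)) /=; lia.
Qed.

Lemma val_iter_succ m (x : 'I_n) : val (iter m succ x) = (x + m) %% n.
Proof.
elim: m => [|m IHm] /=; first by rewrite addn0 modn_small.
by rewrite IHm -addn1 modnDml addn1 addnS.
Qed.

Lemma has_walk_forward (x u : 'I_n) : has_walk adj ((u + n - x) %% n) x u.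
Proof.
set m := (u + n - x) %% n.
have -> : u = iter m succ x.
  apply: val_inj; rewrite val_iter_succ modnDmr addnC subnK; last first.
    by have := ltn_ord x; lia.
  by rewrite modnDr modn_small.
apply/has_walkP; exists (traject succ (succ x) m); first exact: size_traject.
rewrite /walk last_traject eqxx andbT.
apply: (sub_path _ (fpath_traject succ x m)) => y z /eqP <-.
by rewrite /cycle_adj /= eqxx.
Qed.

(* One of the two arcs between x and u has length at most n/2. *)
Lemma dist_cycle_le x u : dist adj x u <= n./2.
Proof.
have x_lt := ltn_ord x; have u_lt := ltn_ord u.
have d_fwd : dist adj x u <= (u + n - x) %% n.
  by apply: dist_le (has_walk_forward x u) _; rewrite card_ord ltn_pmod ?n_gt0.
have d_bwd : dist adj x u <= (x + n - u) %% n.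
  rewrite (dist_sym cycle_adj_sym).
  by apply: dist_le (has_walk_forward u x) _; rewrite card_ord ltn_pmod ?n_gt0.
have := @modn_once (u + n - x) n ltac:(lia); have := @modn_once (x + n - u) n ltac:(lia).
lia.
Qed.

(* Beyond n/2 the neighbourhoods are empty, so sign separation holds. *)
Lemma sign_separated_far neg u k : n./2 < k -> sign_separated adj neg u k.
Proof.
move=> k_gt v w; rewrite inE => /eqP vk.
by move: (dist_cycle_le v u); rewrite vk leqNgt k_gt.
Qed.

Lemma netdeg_cycle neg u : sign_separated adj neg u 1 -> netdeg adj neg u = 0%R.
Proof.
move=> separated; have [sp_neq s_neq p_neq] := succ_pred_neq u.
have nbr_dist w : w != u -> adj u w -> w \in Nk adj u 1.
  by move=> wu_neq uw_adj; rewrite inE dist_adj // cycle_adj_sym.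
have s_adj : adj u (succ u) by rewrite cycle_nbrs eqxx.
have p_adj : adj u (pred u) by rewrite cycle_nbrs eqxx orbT.
apply: (netdeg_two_neighbours sp_neq (cycle_nbrs u)).
have := separated _ _ (nbr_dist _ s_neq s_adj) (nbr_dist _ p_neq p_adj) sp_neq.
rewrite !sigma_max_adj 1?eq_sym //.
by case: (neg u (succ u)); case: (neg u (pred u)).
Qed.

End Cycle.

Theorem theorem2p8 (n : nat) (neg : 'I_n -> 'I_n -> bool) :
  3 <= n ->
  (forall x y, neg x y = neg y x) ->
  compatible (cycle_adj n) neg ->
  (metric_dim_is (cycle_adj n) neg 1 <->
   exists u : 'I_n,
     netdeg (cycle_adj n) neg u = 0%R /\
     (forall k, 1 <= k <= n./2 ->
        forall v w, v \in Nk (cycle_adj n) u k -> w \in Nk (cycle_adj n) u k ->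
          v != w ->
          sigma_max (cycle_adj n) neg u v != sigma_max (cycle_adj n) neg u w)).
Proof.
move=> n_gt2 neg_sym _.
have adj_sym := @cycle_adj_sym n.
pose a : 'I_n := Ordinal (n_gt0 n_gt2); pose b : 'I_n := Ordinal n_gt2.
rewrite (metric_dim1P (cycle_adj n) neg (a := a) (b := b)) //.
split=> [[u /(resolving1P adj_sym neg_sym) separated] | [u [_ separated]]].
  by exists u; split=> [|k _]; [apply: netdeg_cycle | apply: separated].
exists u; apply/(resolving1P adj_sym neg_sym) => k.
have [-> | k_gt0] := posnP k; first exact: sign_separated0.
have [k_le | k_gt] := leqP k n./2; first by apply: separated; rewrite k_gt0.
exact: sign_separated_far.
Qed.
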